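(* In the setting described in the context, for every $j$ with $1\leqslant j\leqslant n-1$, the set of points $\{p_J : J \text{ an ordered subset of } \{1,\ldots,|L|\},\ |J|=j\}$ is contained in an $|L|^{j}$ grid of $\pi_{j+1}$.
   Context: Let ${\mathbb K}$ be a field, $n\geqslant 2$, and consider $\mathrm{PG}_n({\mathbb K})$. For two non-intersecting subspaces $x,y$, $x\oplus y$ denotes their span. Fix points $x_0,\ldots,x_n$ in general position and put $\Sigma_i=x_0\oplus\cdots\oplus x_i$, $\pi_i=x_1\oplus\cdots\oplus x_i$ for $i=1,\ldots,n$. For $i=3,\ldots,n$ let $y_i$ be a point on the line $x_{i-1}\oplus x_i$ different from $x_{i-1}$ and $x_i$. Let $L$ be a finite set of lines of the plane $\Sigma_2$ meeting the line $\pi_2$ in pairwise distinct points, all different from $x_2$. Label them $\ell_{\{1\}},\ldots,\ell_{\{|L|\}}$ and put $p_{\{i\}}=\ell_{\{i\}}\cap\pi_2$. An ordered subset $J$ of $\{1,\ldots,|L|\}$ is a sequence of distinct elements; for $|J|\geqslant2$ write $J=(\ldots,b,a)$ ($a$ last, $b$ second-to-last) and let $J\setminus\{a\}$, $J\setminus\{b\}$ be obtained by deleting $a$, resp. $b$, keeping the order. For $2\leqslant|J|\leqslant n-1$ define recursively $p_J=(x_{|J|+1}\oplus p_{J\setminus\{a\}})\cap(y_{|J|+1}\oplus p_{J\setminus\{b\}})$, a point of $\pi_{|J|+1}$. A $N^{k}$ grid in a $k$-dimensional projective space $\mathrm{PG}_k({\mathbb K})$ is a point set which, with respect to a suitable basis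 of the underlying vector space, has the form $\{\langle(a_1,\ldots,a_k,1)\rangle : a_i\in A_i\}$, where each $A_i\subseteq{\mathbb K}$ has size $N$; here $\pi_{j+1}$ is regarded as $\mathrm{PG}_j({\mathbb K})$. *)

From HB Require Import structures.
From mathcomp Require Import all_boot all_order all_algebra.
Set Implicit Arguments. Unset Strict Implicit. Unset Printing Implicit Defensive.
Import GRing.Theory.
Local Open Scope ring_scope.

(* Model of PG_n(K): points/subspaces of PG_n(K) are row spaces (mxalgebra)
   of K^(n+1) = 'rV[K]_n.+1.  A point is the row space of a nonzero vector. *)

Definition pi_sp (K : fieldType) (n : nat) (x : nat -> 'rV[K]_n.+1) (k : nat)
  : 'M[K]_n.+1 := (\sum_(1 <= i < k.+1) <<x i>>)%MS.

Definition Sigma_sp (K : fieldType) (n : nat) (x : nat -> 'rV[K]_n.+1) (k : nat)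
  : 'M[K]_n.+1 := (\sum_(0 <= i < k.+1) <<x i>>)%MS.

(* p_J, by recursion on k = |J|.  For J = (..., b, a) of size k >= 2:
   J \ {a} = take (k-1) J,   J \ {b} = take (k-2) J ++ drop (k-1) J,
   p_J = (x_{k+1} (+) p_{J\{a}}) /\ (y_{k+1} (+) p_{J\{b}}). *)
Fixpoint pJ_rec (K : fieldType) (n m : nat) (x y : nat -> 'rV[K]_n.+1)
  (l : 'I_m -> 'M[K]_n.+1) (k : nat) (J : seq 'I_m) : 'M[K]_n.+1 :=
  match k with
  | 0 => 0
  | k'.+1 =>
    if k' is 0 then
      (match J with [:: i] => (l i :&: pi_sp x 2)%MS | _ => 0 end)
    else
      ((x k.+1 + pJ_rec x y l k' (take k' J)) :&:
       (y k.+1 + pJ_rec x y l k' (take k'.-1 J ++ drop k' J)))%MS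
  end.

Definition pJ (K : fieldType) (n m : nat) (x y : nat -> 'rV[K]_n.+1)
  (l : 'I_m -> 'M[K]_n.+1) (J : seq 'I_m) : 'M[K]_n.+1 :=
  pJ_rec x y l (size J) J.

(* In the basis x_0, ..., x_n the data normalise to y_i = x_{i-1} + t_i x_i with
   t_i != 0, and l_i meets pi_2 in x_1 + c_i x_2 with the c_i pairwise distinct.
   By induction on k = |J|,
     p_J = x_1 + sum_{u<k} s_u (g_u - g_{u-1}) x_{u+2},
   where g_u = c_{J_u}, g_{-1} = 0 and s_u = (-t_3) ... (-t_{u+2}): the points
   p_{J\{a}} and p_{J\{b}} differ by a multiple d x_k, so the lines joining them to
   x_{k+1} and to y_{k+1} meet in p_{J\{a}} - t_{k+1} d x_{k+1}.  This expression is
   affine in (g_0, ..., g_{k-1}), each g_u ranging over {c_1, ..., c_|L|}, and the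
   vectors it involves are triangular in x_1, ..., x_{k+1}, hence a basis of
   pi_{k+1} in which every p_J is a grid point. *)

From HB Require Import structures.
From mathcomp Require Import all_boot all_order all_algebra.
From mathcomp Require Import zify ring.
Set Implicit Arguments. Unset Strict Implicit. Unset Printing Implicit Defensive.
Import GRing.Theory.
Local Open Scope ring_scope.

Lemma nth_take_drop (T : Type) (x0 : T) (s : seq T) k u : (k < size s)%N ->
  nth x0 (take k s ++ drop k.+1 s) u = nth x0 s (if (u < k)%N then u else u.+1).
Proof.
move=> ks; rewrite nth_cat size_take ks; case: ltnP => uk; first exact: nth_take.
by rewrite nth_drop; congr nth; lia.
Qed.

Section Lines.
Variables (K : fieldType) (n : nat).
Implicit Types (a b w : 'rV[K]_n).

Lemma sub_adds_rV w a b : (w <= a + b)%MS -> exists l r, w = l *: a + r *: b.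
Proof.
case/sub_addsmxP => u ->; exists (u.1 0 0), (u.2 0 0).
by rewrite {1}[u.1]mx11_scalar {1}[u.2]mx11_scalar !mul_scalar_mx.
Qed.

Lemma line_point_normal w a b : (w <= a + b)%MS -> ~~ (w <= b)%MS ->
  exists t, (w == (a + t *: b)%R)%MS.
Proof.
move=> /sub_adds_rV[l [r ->]] wb.
have l0 : l != 0 by apply: contraNneq wb => ->; rewrite scale0r add0r scalemx_sub.
exists (r / l); have -> : a + (r / l) *: b = l^-1 *: (l *: a + r *: b).
  by rewrite scalerDr !scalerA mulVf // scale1r mulrC.
by apply/eqmxP; apply: eqmx_sym; apply: eqmx_scale; rewrite invr_neq0.
Qed.

Lemma line_point_normal_neq0 w a b : (w <= a + b)%MS -> ~~ (w <= a)%MS -> ~~ (w <= b)%MS ->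
  exists2 t, t != 0 & (w == (a + t *: b)%R)%MS.
Proof.
move=> wab wa wb; have [t wE] := line_point_normal wab wb; exists t => //.
by apply: contraNneq wa => t0; rewrite (eqmxP wE) t0 scale0r addr0.
Qed.

Lemma rank1_eqmx_rV m (B : 'M[K]_(m, n)) : \rank B = 1%N -> exists v : 'rV_n, (v == B)%MS.
Proof.
move=> rB; have : B != 0 by rewrite -mxrank_eq0 rB.
case/rowV0Pn => v vB v0; exists v.
by rewrite -(mxrank_leqif_eq vB).2 rB rank_rV v0.
Qed.

Lemma capmx_lines a b P (t s : K) :
  (forall l r m, l *: a + r *: P + m *: b = 0 -> [/\ l = 0, r = 0 & m = 0]) ->
  ((a + P) :&: ((b + t *: a)%R + (P + s *: b)%R) == (P - (t * s) *: a)%R)%MS.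
Proof.
move=> indep; apply/andP; split.
  apply/rV_subP => w; rewrite sub_capmx => /andP[].
  case/sub_adds_rV => l [r ->]; case/sub_adds_rV => mu [nu E].
  have [_ r_nu mu_nu] : [/\ l - mu * t = 0, r - nu = 0 & - mu - nu * s = 0].
    apply: indep; rewrite -[0](subrr (l *: a + r *: P)) {2}E.
    by apply/rowP => i; rewrite !mxE; ring.
  apply/sub_rVP; exists nu; rewrite E; apply/rowP => i; rewrite !mxE.
  have -> : mu = - (nu * s) by move/eqP: mu_nu; rewrite subr_eq0 eqr_oppLR => /eqP.
  ring.
have -> : P - (t * s) *: a = (- (t * s)) *: a + P by rewrite addrC scaleNr.
rewrite sub_capmx addmx_sub_adds ?scalemx_sub ?submx_refl //=.
have -> : (- (t * s)) *: a + P = (- s) *: (b + t *: a) + (P + s *: b).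
  by apply/rowP => i; rewrite !mxE; ring.
by rewrite addmx_sub_adds ?scalemx_sub ?submx_refl.
Qed.

End Lines.

Section PiSpaces.
Variables (K : fieldType) (n : nat) (x : nat -> 'rV[K]_n.+1).

Lemma pi_spS k : pi_sp x k.+1 = (pi_sp x k + <<x k.+1>>)%MS.
Proof. by rewrite /pi_sp big_nat_recr. Qed.

Lemma x_sub_pi_sp k t : (1 <= t <= k)%N -> (x t <= pi_sp x k)%MS.
Proof.
elim: k => [|k IH] tk; first by lia.
rewrite pi_spS; have [tk'|tk'] := ltnP t k.+1.
  by apply: submx_trans (addsmxSl _ _); apply: IH; lia.
have -> : t = k.+1 by lia.
by rewrite -genmxE addsmxSr.
Qed.

Lemma rank_pi_sp k : (\rank (pi_sp x k) <= k)%N.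
Proof.
elim: k => [|k IH]; first by rewrite /pi_sp big_geq // mxrank0.
rewrite pi_spS; apply: leq_trans (mxrank_adds_leqif _ _) _.
by rewrite genmxE; have := rank_leq_row (x k.+1); lia.
Qed.

Lemma pi_sp2_sub : (pi_sp x 2 <= x 1%N + x 2%N)%MS.
Proof.
by rewrite !pi_spS /pi_sp big_geq // !addsmx_sub sub0mx !genmxE addsmxSl addsmxSr.
Qed.

Lemma cap_pi_sp2_coord (B : 'M[K]_n.+1) :
  \rank (B :&: pi_sp x 2)%MS = 1%N -> ~~ (B :&: pi_sp x 2 == x 2%N)%MS ->
  exists c, (B :&: pi_sp x 2 == (x 1%N + c *: x 2%N)%R)%MS.
Proof.
move=> rB Bx2; have [v vB] := rank1_eqmx_rV rB.
have v_sub : (v <= x 1%N + x 2%N)%MS.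
  by rewrite (eqmxP vB); apply: submx_trans (capmxSr _ _) pi_sp2_sub.
have v_x2 : ~~ (v <= x 2%N)%MS.
  apply: contra Bx2 => vx2; rewrite -!(eqmxP vB) vx2 -(mxrank_leqif_sup vx2).2.
  by rewrite eqn_leq mxrankS // (eqmxP vB) rB rank_leq_row.
have [c vE] := line_point_normal v_sub v_x2; exists c.
by apply/eqmxP; apply: eqmx_trans (eqmx_sym (eqmxP vB)) (eqmxP vE).
Qed.

End PiSpaces.

Section Coordinates.
Variables (K : fieldType) (n : nat) (x : nat -> 'rV[K]_n.+1).
Hypothesis x_free : row_free (\matrix_(i < n.+1) x i).

Definition coord (v : 'rV[K]_n.+1) (i : nat) : K :=
  (v *m invmx (\matrix_(i < n.+1) x i)) 0 (inord i).

Lemma coord0 i : coord 0 i = 0.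
Proof. by rewrite /coord mul0mx mxE. Qed.

Lemma coordD u v i : coord (u + v) i = coord u i + coord v i.
Proof. by rewrite /coord mulmxDl mxE. Qed.

Lemma coordZ a v i : coord (a *: v) i = a * coord v i.
Proof. by rewrite /coord -scalemxAl mxE. Qed.

Lemma coord_sum (I : Type) (r : seq I) (P : pred I) (F : I -> 'rV_n.+1) i :
  coord (\sum_(k <- r | P k) F k) i = \sum_(k <- r | P k) coord (F k) i.
Proof. exact: (big_morph (coord^~ i) (fun u v => coordD u v i) (coord0 i)). Qed.

Lemma coord_x i j : (i <= n)%N -> (j <= n)%N -> coord (x j) i = (i == j)%:R.
Proof.
move=> ilen jlen; have -> : x j = delta_mx 0 (inord j) *m \matrix_(i < n.+1) x i.
  by rewrite -rowE rowK inordK.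
rewrite /coord -mulmxA mulmxV -?row_free_unit // mulmx1.
by rewrite mxE eqxx /= -(inj_eq val_inj) /= !inordK.
Qed.

End Coordinates.

Fixpoint axis_scale (K : pzRingType) (t : nat -> K) (u : nat) : K :=
  if u is v.+1 then - t v.+3 * axis_scale t v else 1.

Definition bdiff (K : zmodType) (g : nat -> K) (u : nat) : K :=
  g u - (if u is v.+1 then g v else 0).

Lemma axis_scale_neq0 (K : fieldType) (t : nat -> K) k :
  (forall i, (3 <= i <= k.+2)%N -> t i != 0) -> axis_scale t k != 0.
Proof.
elim: k => [|k IH] t0 /=; first exact: oner_neq0.
by rewrite mulf_neq0 ?oppr_eq0 ?t0 ?IH ?leqnn // => i ?; apply: t0; lia.
Qed.

Lemma bdiff_eq0 (K : zmodType) (g : nat -> K) k :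
  (forall u, (u < k)%N -> bdiff g u = 0) -> forall u, (u < k)%N -> g u = 0.
Proof.
move=> d0; elim=> [|u IH] uk; have := d0 _ uk; rewrite /bdiff ?subr0 // IH ?subr0 //.
exact: ltnW.
Qed.

Lemma bdiff_sum (K : zmodType) k (F : 'I_k -> nat -> K) u :
  bdiff (fun v => \sum_(i < k) F i v) u = \sum_(i < k) bdiff (F i) u.
Proof. by rewrite /bdiff sumrB; case: u => [|u] //; rewrite big1_eq. Qed.

Lemma bdiffZ (K : pzRingType) (a : K) (g : nat -> K) u :
  bdiff (fun v => a * g v) u = a * bdiff g u.
Proof. by rewrite /bdiff mulrBr; case: u => [|u] //; rewrite mulr0. Qed.

Lemma sum_delta (K : pzSemiRingType) k (g : nat -> K) u : (u < k)%N ->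
  \sum_(i < k) g i * (u == i)%:R = g u.
Proof.
move=> uk; rewrite (bigD1 (Ordinal uk)) //= eqxx mulr1 big1 ?addr0 // => i.
by rewrite -(inj_eq val_inj) /= eq_sym => /negPf ->; rewrite mulr0.
Qed.

Section GridVector.
Variables (K : fieldType) (n : nat) (x : nat -> 'rV[K]_n.+1) (t : nat -> K).

Definition grid_vec k (g : nat -> K) : 'rV_n.+1 :=
  \sum_(u < k) (axis_scale t u * bdiff g u) *: x u.+2.

Lemma grid_vecS k g :
  grid_vec k.+1 g = grid_vec k g + (axis_scale t k * bdiff g k) *: x k.+2.
Proof. by rewrite /grid_vec big_ord_recr. Qed.

Lemma eq_grid_vec k g1 g2 :
  (forall u, (u < k)%N -> g1 u = g2 u) -> grid_vec k g1 = grid_vec k g2.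
Proof.
move=> eq_g; apply: eq_bigr => u _; rewrite /bdiff eq_g //.
by case: (nat_of_ord u) (ltn_ord u) => [|v] // vk; rewrite eq_g // ltnW.
Qed.

Lemma grid_vec_update k g1 g2 : (forall u, (u < k)%N -> g2 u = g1 u) ->
  grid_vec k.+1 g2 = grid_vec k.+1 g1 + (axis_scale t k * (g2 k - g1 k)) *: x k.+2.
Proof.
move=> eq_g; rewrite !grid_vecS (eq_grid_vec eq_g) -addrA -scalerDl /bdiff.
by congr (_ + _ *: _); case: k eq_g => [|k] eq_g; rewrite ?(eq_g k) //; ring.
Qed.

Lemma grid_vec_delta k g :
  grid_vec k g = \sum_(i < k) g i *: grid_vec k (fun u => (u == i)%:R).
Proof.
rewrite (@eq_grid_vec k g (fun v => \sum_(i < k) g i * (v == i)%:R)); last first.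
  by move=> u uk; rewrite sum_delta.
rewrite /grid_vec; under [RHS]eq_bigr do rewrite scaler_sumr.
rewrite exchange_big /=; apply: eq_bigr => u _.
rewrite bdiff_sum mulr_sumr scaler_suml; apply: eq_bigr => i _.
by rewrite bdiffZ scalerA mulrCA.
Qed.

Lemma grid_vec_sub_pi_sp k g : (grid_vec k g <= pi_sp x k.+1)%MS.
Proof.
apply/summx_sub => u _; apply/scalemx_sub/x_sub_pi_sp.
by have := ltn_ord u; lia.
Qed.

End GridVector.

Section GridCoordinates.
Variables (K : fieldType) (n : nat) (x : nat -> 'rV[K]_n.+1) (t : nat -> K).
Hypothesis x_free : row_free (\matrix_(i < n.+1) x i).

Lemma coord_grid_vec1 k g : (k < n)%N -> coord x (grid_vec x t k g) 1 = 0.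
Proof.
move=> kn; rewrite coord_sum big1 // => u _.
by rewrite coordZ (coord_x x_free) //= ?mulr0 //; have := ltn_ord u; lia.
Qed.

Lemma coord_grid_vec k g u : (k < n)%N -> (u < k)%N ->
  coord x (grid_vec x t k g) u.+2 = axis_scale t u * bdiff g u.
Proof.
move=> kn uk; rewrite coord_sum (bigD1 (Ordinal uk)) //= coordZ.
rewrite (coord_x x_free) ?eqxx ?mulr1; try lia.
rewrite big1 ?addr0 // => i; rewrite -(inj_eq val_inj) /= => /negPf ui.
by rewrite coordZ (coord_x x_free) 1?eq_sym ?eqSS ?ui ?mulr0 //; have := ltn_ord i; lia.
Qed.

Lemma x1_comb_eq0 p q Q a r b : (1 < p <= n)%N -> (1 < q <= n)%N -> p != q ->
  coord x Q 1 = 0 -> a *: x p + r *: (x 1%N + Q) + b *: x q = 0 ->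
  [/\ a = 0, r = 0 & b = 0].
Proof.
move=> /andP[p1 pn] /andP[q1 qn] pq Q1 E.
have coordE i : (i <= n)%N ->
    a * (i == p)%:R + r * ((i == 1%N)%:R + coord x Q i) + b * (i == q)%:R = 0.
  by move=> i_n; rewrite -(coord0 x i) -E !coordD !coordZ coordD !(coord_x x_free) //; lia.
have r0 : r = 0.
  have := coordE 1%N (leq_trans (ltnW p1) pn).
  by rewrite (ltn_eqF p1) (ltn_eqF q1) eqxx Q1 !mulr0n mulr1n !mulr0 addr0 add0r addr0 mulr1.
split=> //.
  by have := coordE p pn; rewrite r0 eqxx (negPf pq) mul0r mulr1n mulr0n mulr1 mulr0 !addr0.
by have := coordE q qn; rewrite r0 eqxx eq_sym (negPf pq) mul0r mulr1n mulr0n mulr1 mulr0 !add0r.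
Qed.

End GridCoordinates.

Section GridBasis.
Variables (K : fieldType) (n : nat) (x : nat -> 'rV[K]_n.+1) (t : nat -> K) (j : nat).
Hypothesis x_free : row_free (\matrix_(i < n.+1) x i).
Hypothesis t_neq0 : forall i, (3 <= i <= n)%N -> t i != 0.
Hypothesis j_lt_n : (j < n)%N.

Definition grid_basis (i : 'I_j.+1) : 'rV[K]_n.+1 :=
  if (i < j)%N then grid_vec x t j (fun u => (u == i)%:R) else x 1%N.

Lemma grid_basis_comb (g : nat -> K) r :
  \sum_(i < j) g i *: grid_basis (widen_ord (leqnSn j) i) + r *: grid_basis ord_max
  = r *: x 1%N + grid_vec x t j g.
Proof.
rewrite addrC /grid_basis /= ltnn (grid_vec_delta _ _ _ g); congr (_ + _).
by apply: eq_bigr => i _; rewrite /= ltn_ord.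
Qed.

Lemma grid_basis_free : row_free (\matrix_i grid_basis i).
Proof.
rewrite -kermx_eq0; apply/rowV0P => v /sub_kermxP vB0.
pose g u := v 0 (inord u).
have comb0 : g j *: x 1%N + grid_vec x t j g = 0.
  rewrite -grid_basis_comb -[RHS]vB0 mulmx_sum_row big_ord_recr rowK /g.
  congr (_ + v 0 _ *: _); last by apply/val_inj; rewrite /= inordK.
  under [RHS]eq_bigr do rewrite rowK; apply: eq_bigr => i _; congr (v 0 _ *: _); apply/val_inj.
  by rewrite /= (inordK (ltnW (ltn_ord i))).
have coord_comb i : coord x (g j *: x 1%N + grid_vec x t j g) i = 0.
  by rewrite comb0 coord0.
have gj : g j = 0.
  have n_gt0 : (0 < n)%N by lia.
  have := coord_comb 1%N.
  rewrite coordD coordZ (coord_grid_vec1 t x_free) // (coord_x x_free) //.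
  by rewrite eqxx mulr1n mulr1 addr0.
have gu : forall u, (u < j)%N -> g u = 0.
  apply: bdiff_eq0 => u uj; have := coord_comb u.+2.
  rewrite coordD coordZ gj mul0r add0r (coord_grid_vec t x_free) // => /eqP.
  rewrite mulf_eq0 (negPf (axis_scale_neq0 _)) => [/eqP //|i ?].
  apply: t_neq0; lia.
apply/rowP => i; rewrite mxE -[i]inord_val; have [ij|ji] := ltnP i j; first exact: gu.
by rewrite (_ : val i = j) //; apply/eqP; rewrite eqn_leq ji -ltnS ltn_ord.
Qed.

Lemma grid_basis_eqmx : (\matrix_i grid_basis i == pi_sp x j.+1)%MS.
Proof.
have B_sub : (\matrix_i grid_basis i <= pi_sp x j.+1)%MS.
  apply/row_subP => i; rewrite rowK /grid_basis; case: ifP => _.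
    exact: grid_vec_sub_pi_sp.
  by apply: x_sub_pi_sp.
rewrite -(mxrank_leqif_eq B_sub).2 eqn_leq mxrankS // (eqP grid_basis_free).
exact: rank_pi_sp.
Qed.

End GridBasis.

Section PointsPJ.
Variables (K : fieldType) (n m : nat) (x y : nat -> 'rV[K]_n.+1).
Variables (l : 'I_m -> 'M[K]_n.+1) (c : 'I_m -> K) (t : nat -> K).
Hypothesis x_free : row_free (\matrix_(i < n.+1) x i).
Hypothesis y_on_line : forall i, (3 <= i <= n)%N -> (y i == (x i.-1 + t i *: x i)%R)%MS.
Hypothesis l_cap_pi2 : forall i, (l i :&: pi_sp x 2 == (x 1%N + c i *: x 2%N)%R)%MS.

Lemma pJ_rec_grid_vec k J : (0 < k < n)%N -> size J = k ->
  (pJ_rec x y l k J == (x 1%N + grid_vec x t k (nth 0 (map c J)))%R)%MS.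
Proof.
elim: k J => [|k IH] J // /andP[_ kn] sizeJ.
case: k IH kn sizeJ => [_ _|k IH kn sizeJ].
  case: J => [|i [|]] //= _.
  by rewrite /grid_vec big_ord1 /bdiff mul1r subr0.
set g := nth 0 (map c J); set P := (x 1%N + grid_vec x t k.+1 g)%R.
set s := axis_scale t k * (g k.+1 - g k).
have k_lt : (k < size (map c J))%N by rewrite size_map sizeJ.
have pJa : (pJ_rec x y l k.+1 (take k.+1 J) == P)%MS.
  rewrite /P -(@eq_grid_vec _ _ _ _ _ (nth 0 (map c (take k.+1 J)))).
    by apply: IH; rewrite ?size_take ?sizeJ ?ltnSn //; lia.
  by move=> u uk; rewrite map_take nth_take.
set g2 := nth 0 (map c (take k J ++ drop k.+1 J)).
have g2E u : g2 u = g (if (u < k)%N then u else u.+1).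
  by rewrite /g2 map_cat map_take map_drop nth_take_drop.
have pJb : (pJ_rec x y l k.+1 (take k J ++ drop k.+1 J) == (P + s *: x k.+2)%R)%MS.
  have g2k : g2 k = g k.+1 by rewrite g2E ltnn.
  rewrite /P /s -addrA -g2k -(grid_vec_update _ _ (g1 := g) (g2 := g2)).
    by apply: IH; rewrite ?size_cat ?size_take ?size_drop ?sizeJ ?(leqnSn k.+1); lia.
  by move=> u uk; rewrite g2E uk.
have indep : forall a r b, a *: x k.+3 + r *: P + b *: x k.+2 = 0 -> [/\ a = 0, r = 0 & b = 0].
  move=> a r b; apply: (x1_comb_eq0 x_free (Q := grid_vec x t k.+1 g)); try lia.
  by rewrite (coord_grid_vec1 t x_free) //; lia.
have -> : (x 1%N + grid_vec x t k.+2 g = P - (t k.+3 * s) *: x k.+3)%R.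
  by rewrite grid_vecS addrA -scaleNr /s /bdiff /=; congr (_ + _ *: _); ring.
apply/eqmxP; apply: eqmx_trans (eqmxP (capmx_lines _ _ indep)).
apply: cap_eqmx; apply: adds_eqmx; try exact: eqmx_refl; apply/eqmxP => //.
by apply: y_on_line; lia.
Qed.

End PointsPJ.

Theorem lemma2p2 (K : fieldType) (n : nat) (x y : nat -> 'rV[K]_n.+1)
  (m : nat) (l : 'I_m -> 'M[K]_n.+1) :
  (2 <= n)%N ->
  (* x_0, ..., x_n in general position (a basis of K^(n+1)) *)
  row_free (\matrix_(i < n.+1) x i) ->
  (* y_i (3 <= i <= n) is a point of the line x_{i-1} (+) x_i, distinct from both *)
  (forall i : nat, (3 <= i <= n)%N ->
     [/\ y i != 0, (y i <= x i.-1 + x i)%MS, ~~ (y i <= x i.-1)%MS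
       & ~~ (y i <= x i)%MS]) ->
  (* l_1, ..., l_|L| : lines of Sigma_2 meeting pi_2 in a point *)
  (forall i, \rank (l i) = 2%N /\ (l i <= Sigma_sp x 2)%MS) ->
  (forall i, \rank (l i :&: pi_sp x 2)%MS = 1%N) ->
  (* the intersection points are pairwise distinct ... *)
  (forall i k, (l i :&: pi_sp x 2 == l k :&: pi_sp x 2)%MS -> i = k) ->
  (* ... and different from x_2 *)
  (forall i, ~~ (l i :&: pi_sp x 2 == x 2%N)%MS) ->
  forall j : nat, (1 <= j <= n.-1)%N ->
  (* there is an |L|^j grid of pi_{j+1} containing all p_J, |J| = j *)
  exists (b : 'I_j.+1 -> 'rV[K]_n.+1) (A : 'I_j -> seq K),
    [/\ row_free (\matrix_(i < j.+1) b i),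
        (\matrix_(i < j.+1) b i == pi_sp x j.+1)%MS,
        (forall i, uniq (A i) /\ size (A i) = m) &
        forall J : seq 'I_m, uniq J -> size J = j ->
          exists a : 'I_j -> K, (forall i, a i \in A i) /\
            (pJ x y l J ==
               (\sum_(i < j) a i *: b (widen_ord (leqnSn j) i) + b ord_max)%R)%MS].
Proof.
(* The lines l_i matter only through their points l_i :&: pi_2. *)
move=> _ x_free y_line _ l_cap_rank1 l_inj l_x2 j /andP[j_gt0 j_lt].
have t_ex i : exists ti : K,
    (3 <= i <= n)%N ==> (ti != 0) && (y i == (x i.-1 + ti *: x i)%R)%MS.
  case: (boolP (3 <= i <= n)%N) => [i3n|_]; last by exists 0.
  have [_ y_sub y_x1 y_x2] := y_line i i3n.
  by have [ti ti0 yE] := line_point_normal_neq0 y_sub y_x1 y_x2; exists ti; rewrite ti0.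
pose t i := xchoose (t_ex i).
have t_neq0 i : (3 <= i <= n)%N -> t i != 0.
  by move/(implyP (xchooseP (t_ex i))) => /andP[].
have y_on_line i : (3 <= i <= n)%N -> (y i == (x i.-1 + t i *: x i)%R)%MS.
  by move/(implyP (xchooseP (t_ex i))) => /andP[].
have c_ex i : exists ci, (l i :&: pi_sp x 2 == (x 1%N + ci *: x 2%N)%R)%MS.
  exact: cap_pi_sp2_coord.
pose c i := xchoose (c_ex i).
have cP i : (l i :&: pi_sp x 2 == (x 1%N + c i *: x 2%N)%R)%MS := xchooseP (c_ex i).
have c_inj : injective c.
  move=> i k cik; apply: l_inj; apply/eqmxP; apply: eqmx_trans (eqmxP (cP i)) _.
  by rewrite cik; apply/eqmx_sym/eqmxP.
have j_lt_n : (j < n)%N by lia.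
exists (@grid_basis K n x t j), (fun=> map c (enum 'I_m)); split.
- exact: grid_basis_free x_free t_neq0 j_lt_n.
- exact: grid_basis_eqmx x_free t_neq0 j_lt_n.
- by move=> i; rewrite map_inj_uniq ?enum_uniq // size_map size_enum_ord.
move=> J _ sizeJ; exists (nth 0 (map c J)); split.
  move=> i; have : nth 0 (map c J) i \in map c J by rewrite mem_nth // size_map sizeJ.
  by case/mapP => k _ ->; rewrite map_f ?mem_enum.
rewrite -[grid_basis _ _ ord_max]scale1r grid_basis_comb scale1r /pJ sizeJ.
by apply: pJ_rec_grid_vec => //; rewrite j_gt0.
Qed.
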